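(* Let $n\ge1$, identify $\mathbb{R}^{n+1}=\mathbb{R}^n\times\mathbb{R}$, let $f\colon\mathbb{R}^n\to(0,\infty)$ be continuous with epigraph $L=\{(x,y)\mid f(x)\le y\}$, and let $K\subset\mathbb{R}^{n+1}$ be a closed set with $K\cap L=\emptyset$. Suppose there exist no point $x_0\in\mathbb{R}^n$ and real numbers $0<y_1<y_2$ such that $(x_0,y_1)\notin K$ and $(x_0,y_2)\in K$. Then for every $x\in\mathbb{R}^n$ the vertical line $\{(x,y)\mid y\in\mathbb{R}\}$ contains at most one point $p$ with $d(p,K)=d(p,L)$.
   Context: $d(p,A)=\inf\{|p-q|\mid q\in A\}$ (Euclidean distance). *)

From HB Require Import structures.
From mathcomp Require Import all_boot all_order all_algebra.
From mathcomp Require Import all_classical all_reals all_analysis.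
Set Implicit Arguments. Unset Strict Implicit. Unset Printing Implicit Defensive.
Import Order.TTheory GRing.Theory Num.Theory.
Import numFieldNormedType.Exports.
Local Open Scope classical_set_scope.
Local Open Scope ring_scope.

Definition pt (R : realType) (n : nat) := ('rV[R]_n * R)%type.

Definition edist (R : realType) (n : nat) (p q : pt R n) : R :=
  Num.sqrt (\sum_(i < n) (p.1 0 i - q.1 0 i) ^+ 2 + (p.2 - q.2) ^+ 2).

(* d(p, A) = inf { |p - q| : q in A }, in the extended reals
   (so that d(p, emptyset) = +oo, as for the usual infimum). *)
Definition dist_set (R : realType) (n : nat) (p : pt R n) (A : set (pt R n))
  : \bar R :=
  ereal_inf [set (edist p q)%:E | q in A].

Definition epigraph (R : realType) (n : nat) (f : 'rV[R]_n -> R) : set (pt R n) :=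
  [set p | f p.1 <= p.2].

From Pilot Require Import Defs.
From HB Require Import structures.
From mathcomp Require Import all_boot all_order all_algebra.
From mathcomp Require Import all_classical all_reals all_analysis.
Import Order.TTheory GRing.Theory Num.Theory.
Import numFieldNormedType.Exports.
Local Open Scope classical_set_scope.
Local Open Scope ring_scope.
From mathcomp Require Import ring lra.

(* Suppose (x, y) and (x, y') with y < y' are both equidistant from K and from
   the epigraph L. A point q of L nearest to (x, y) and a point k of K nearest
   to (x, y') are then nearest points of K `|` L. Adding the two optimality
   inequalities gives q.2 <= k.2; as K has no gap above height 0, comparing
   with vertically shifted points forces 0 < y, q.2 = y, k.2 = y' and
   |x - q.1| = |x - k.1|. Since f q.1 <= y < y', continuity of f puts the
   beginning of the horizontal segment from (q.1, y') towards (x, y') into L,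
   which is only compatible with the optimality of k if q.1 = x. Then
   k = (x, y') lies above q = (x, y) in L, so k is in K `&` L. *)

Section NearestPoints.
Context {R : realType} {n : nat}.
Implicit Types (u v x : 'rV[R]_n) (p q a b : pt R n) (A B : set (pt R n)).

Definition hdist2 u v : R := \sum_(i < n) (u 0 i - v 0 i) ^+ 2.

Definition dist2 p q : R := hdist2 p.1 q.1 + (p.2 - q.2) ^+ 2.

Lemma edistE p q : Defs.edist p q = Num.sqrt (dist2 p q).
Proof. by []. Qed.

Lemma hdist2_ge0 u v : 0 <= hdist2 u v.
Proof. by apply: sumr_ge0 => i _; rewrite sqr_ge0. Qed.

Lemma dist2_ge0 p q : 0 <= dist2 p q.
Proof. by rewrite addr_ge0 ?hdist2_ge0 ?sqr_ge0. Qed.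

Lemma hdist2_coord_le u v i : (u 0 i - v 0 i) ^+ 2 <= hdist2 u v.
Proof.
rewrite /hdist2 (bigD1 i) //= lerDl.
by apply: sumr_ge0 => j _; rewrite sqr_ge0.
Qed.

Lemma hdist2_eq0 u v : hdist2 u v = 0 -> u = v.
Proof.
move=> /eqP; rewrite psumr_eq0 => [/allP uv0|i _]; last by rewrite sqr_ge0.
apply/rowP => i; apply/eqP; rewrite -subr_eq0 -sqrf_eq0.
exact: uv0 (mem_index_enum i).
Qed.

Lemma hdist2_segment x u (t : R) :
  hdist2 x (u + t *: (x - u)) = (1 - t) ^+ 2 * hdist2 x u.
Proof.
rewrite /hdist2 mulr_sumr; apply: eq_bigr => i _.
by rewrite !mxE -exprMn; congr (_ ^+ 2); ring.
Qed.

Lemma continuous_dist2 p : continuous (dist2 p).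
Proof.
have sqrB_cont (c : R) (g : pt R n -> R) :
    continuous g -> continuous (fun q => (c - g q) ^+ 2).
  move=> g_cont q.
  by apply: cvgM; apply: cvgB; by [apply: cvg_cst | apply: g_cont].
have coord_cont i : continuous (fun q : pt R n => q.1 0 i).
  move=> q; apply: (@continuous_comp _ _ _ fst (fun u : 'rV[R]_n => u 0 i)).
    exact: cvg_fst.
  exact: (@coord_continuous R 1 n 0 i).
have snd_cont : continuous (fun q : pt R n => q.2) by move=> [a b]; exact: cvg_snd.
move=> q; apply: cvgD; last exact: (sqrB_cont _ _ snd_cont).
apply: (@continuous_big R _ +%R 0 xpredT add_continuous _ (index_enum 'I_n)
  (fun i q => (p.1 0 i - q.1 0 i) ^+ 2)) => i _.
exact: sqrB_cont.
Qed.

Definition is_nearest A p q := A q /\ forall b, A b -> dist2 p q <= dist2 p b.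

(* Minimise [dist2 p] over the compact set of points of A that are no farther
   from p than a0; these lie in a box around p. *)
Lemma exists_nearest {A} p : closed A -> A !=set0 -> exists q, is_nearest A p q.
Proof.
move=> A_closed [a0 Aa0].
pose s := dist2 p a0 + 1.
have in_box (d : R) : d ^+ 2 <= dist2 p a0 -> - s <= d <= s.
  by have := dist2_ge0 p a0; rewrite /s => *; apply/andP; split; nra.
pose C := A `&` [set q | dist2 p q <= dist2 p a0].
pose box :=
  [set v : 'rV[R]_n | forall i, `[p.1 0 i - s, p.1 0 i + s]%classic (v 0 i)]
  `*` `[p.2 - s, p.2 + s]%classic.
have box_compact : compact box.
  apply: compact_setX; last exact: segment_compact.
  exact: (rV_compact (fun i => @segment_compact R (p.1 0 i - s) (p.1 0 i + s))).
have C_closed : closed C.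
  apply: closedI => //.
  have := proj1 (continuous_closedP _) (continuous_dist2 p)
    [set r : R | r <= dist2 p a0].
  by apply; exact: closed_le.
have C_box : C `<=` box.
  move=> q [_ q_le]; split => [i|] /=; rewrite in_itv /=.
    have /in_box : (p.1 0 i - q.1 0 i) ^+ 2 <= dist2 p a0.
      apply: le_trans q_le; apply: le_trans (hdist2_coord_le _ _ i) _.
      by rewrite lerDl sqr_ge0.
    by move=> /andP[? ?]; apply/andP; split; lra.
  have /in_box : (p.2 - q.2) ^+ 2 <= dist2 p a0.
    by apply: le_trans q_le; rewrite lerDr hdist2_ge0.
  by move=> /andP[? ?]; apply/andP; split; lra.
have C0 : C !=set0 by exists a0; split => /=.
have [q /set_mem[Aq _] q_min] := compact_EVT_min C0
  (subclosed_compact C_closed box_compact C_box)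
  (continuous_subspaceT (continuous_dist2 p)).
exists q; split => // b Ab; have [b_le|/ltW b_gt] := leP (dist2 p b) (dist2 p a0).
  by apply: q_min; rewrite inE.
by apply: le_trans (q_min a0 _) b_gt; rewrite inE; split => /=.
Qed.

Lemma dist_set_nearest {A p q} :
  is_nearest A p q -> dist_set p A = (Defs.edist p q)%:E.
Proof.
move=> [Aq q_min]; apply/eqP; rewrite eq_le; apply/andP; split.
  by apply: ereal_inf_lbound; exists q.
apply: le_ereal_inf_tmp => _ [b Ab <-].
by rewrite lee_fin !edistE ler_wsqrtr ?q_min.
Qed.

Lemma edist_eq_dist2 p q q' :
  Defs.edist p q = Defs.edist p q' -> dist2 p q = dist2 p q'.
Proof. by rewrite !edistE => /eqP; rewrite eqr_sqrt ?dist2_ge0 // => /eqP. Qed.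

Lemma dist_set0 p : dist_set p set0 = +oo%E.
Proof. by rewrite /dist_set image_set0 ereal_inf0. Qed.

Lemma nearest_setU {A B p a b} :
  is_nearest A p a -> is_nearest B p b -> dist2 p a = dist2 p b ->
  is_nearest (A `|` B) p a /\ is_nearest (A `|` B) p b.
Proof.
move=> [Aa a_min] [Bb b_min] ab.
have ab_min c : (A `|` B) c -> dist2 p a <= dist2 p c.
  by case=> [/a_min|/b_min] //; rewrite ab.
by split; split=> [|c]; [left | exact: ab_min | right | rewrite -ab; exact: ab_min].
Qed.

Lemma eq_dist_set_nearest {A B p} : closed A -> closed B -> B !=set0 ->
  dist_set p A = dist_set p B ->
  (exists a, A a /\ is_nearest (A `|` B) p a) /\
  (exists b, B b /\ is_nearest (A `|` B) p b).
Proof.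
move=> A_closed B_closed B0 AB.
have [b b_near] := exists_nearest p B_closed B0.
have [A0|/set0P A0] := eqVneq A set0.
  by move: AB; rewrite A0 dist_set0 (dist_set_nearest b_near).
have [a a_near] := exists_nearest p A_closed A0.
move: AB; rewrite (dist_set_nearest a_near) (dist_set_nearest b_near) => -[].
move=> /edist_eq_dist2 /(nearest_setU a_near b_near) [a_nearU b_nearU].
by split; [exists a; split; first case: a_near | exists b; split; first case: b_near].
Qed.

End NearestPoints.

Lemma continuous_segment_lt {R : realType} {V : normedModType R} {g : V -> R}
    {u : V} (x : V) {c : R} :
  continuous g -> g u < c -> exists2 t : R, 0 < t < 1 & g (u + t *: (x - u)) < c.
Proof.
move=> g_cont gu_lt.
have segment_cvg : (fun t : R => g (u + t *: (x - u))) @ (0 : R) --> g u.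
  rewrite -[in X in _ --> X](addr0 u) -[in X in _ --> g (_ + X)](scale0r (x - u)).
  apply: (@continuous_comp _ _ _ (fun t : R => u + t *: (x - u)) g).
    by apply: cvgD; [exact: cvg_cst | apply: cvgZ; [exact: cvg_id | exact: cvg_cst]].
  exact: g_cont.
have [e /= e_gt0 e_ball] := (nbhs_ballP _ _).1 (cvgr_lt (g u) segment_cvg c gu_lt).
exists (Num.min (e / 2) (1 / 2)).
  by rewrite lt_min gt_min; apply/andP; split; [apply/andP; split | apply/orP; right]; lra.
apply: e_ball; rewrite /ball /= sub0r normrN ger0_norm.
  by rewrite gt_min; apply/orP; left; lra.
by rewrite le_min; apply/andP; split; lra.
Qed.

Lemma closed_epigraph {R : realType} {n : nat} {f : 'rV[R]_n -> R} :
  continuous f -> closed (epigraph f).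
Proof.
move=> f_cont.
have -> : epigraph f = (fun p : pt R n => p.2 - f p.1) @^-1` [set r | 0 <= r].
  by apply/seteqP; split => p /=; rewrite /epigraph /= subr_ge0.
apply: (proj1 (continuous_closedP _)); last exact: closed_ge.
move=> [u y]; apply: cvgB; first exact: cvg_snd.
have fst_cont : continuous (fun p : pt R n => p.1) by move=> [v z]; exact: cvg_fst.
exact: (continuous_comp (fst_cont (u, y)) (f_cont u)).
Qed.

Section EquidistantPair.
Context {R : realType} {n : nat} {f : 'rV[R]_n -> R} {K : set (pt R n)}.
Hypothesis f_cont : continuous f.
Hypothesis f_gt0 : forall u, 0 < f u.
Hypothesis K_epigraph_disjoint : K `&` epigraph f = set0.
Hypothesis K_down : forall p s, K p -> 0 < s -> s < p.2 -> K (p.1, s).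

Context {x : 'rV[R]_n} {y y' : R} {q k : pt R n}.
Hypothesis lt_y_y' : y < y'.
Hypothesis Lq : epigraph f q.
Hypothesis Kk : K k.
Hypothesis q_nearest : is_nearest (K `|` epigraph f) (x, y) q.
Hypothesis k_nearest : is_nearest (K `|` epigraph f) (x, y') k.

Lemma le_y_q2 : y <= q.2.
Proof.
rewrite leNgt; apply/negP => lt_q2_y.
have := q_nearest.2 (q.1, y) (or_intror (le_trans Lq (ltW lt_q2_y))).
rewrite /dist2 /=; nra.
Qed.

Lemma le_q2_k2 : q.2 <= k.2.
Proof.
rewrite leNgt; apply/negP => lt_k2_q2.
have : 0 < (y' - y) * (q.2 - k.2) by rewrite mulr_gt0 ?subr_gt0.
have := q_nearest.2 k (or_introl Kk); have := k_nearest.2 q (or_intror Lq).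
rewrite /dist2 /=; nra.
Qed.

Lemma gt0_q2 : 0 < q.2.
Proof. exact: lt_le_trans (f_gt0 q.1) Lq. Qed.

Lemma le_k2_y' : k.2 <= y'.
Proof.
rewrite leNgt; apply/negP => lt_y'_k2.
have k2_gt0 := lt_le_trans gt0_q2 le_q2_k2.
have [y'_gt0|y'_le0] := ltP 0 y'.
  have := k_nearest.2 _ (or_introl (K_down _ _ Kk y'_gt0 lt_y'_k2)).
  rewrite /dist2 /=; nra.
have := k_nearest.2 (k.1, k.2 / 2) (or_introl (K_down _ _ Kk _ _)).
rewrite /dist2 /=; nra.
Qed.

Lemma nearest_hdist2_le : hdist2 x k.1 + (y' - k.2) ^+ 2 <= hdist2 x q.1.
Proof.
have Lq' : epigraph f (q.1, y') := le_trans Lq (le_trans le_q2_k2 le_k2_y').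
by have := k_nearest.2 _ (or_intror Lq'); rewrite /dist2 /= subrr expr0n addr0.
Qed.

Lemma gt0_y : 0 < y.
Proof.
rewrite ltNge; apply/negP => y_le0.
have q2_gt0 := gt0_q2.
have K_mid : K (k.1, q.2 / 2).
  by apply: K_down Kk _ _; have := le_q2_k2; lra.
have : 0 < q.2 * (3 * q.2 - 4 * y) by rewrite mulr_gt0 //; lra.
have := sqr_ge0 (y' - k.2).
have := q_nearest.2 _ (or_introl K_mid); have := nearest_hdist2_le.
rewrite /dist2 /=; nra.
Qed.

Lemma nearest_on_line : [/\ q.2 = y, k.2 = y' & hdist2 x q.1 = hdist2 x k.1].
Proof.
have Ky : K (k.1, y).
  have [lt_y_k2|le_k2_y] := ltP y k.2; first exact: K_down _ _ Kk gt0_y lt_y_k2.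
  have -> : y = k.2 by apply/le_anti; rewrite le_k2_y (le_trans le_y_q2 le_q2_k2).
  by rewrite -surjective_pairing.
have := q_nearest.2 _ (or_introl Ky); have := nearest_hdist2_le.
rewrite /dist2 /= subrr expr0n addr0 => le_hk le_hq.
have : (y - q.2) ^+ 2 + (y' - k.2) ^+ 2 == 0.
  by rewrite eq_le addr_ge0 ?sqr_ge0 // andbT; lra.
rewrite paddr_eq0 ?sqr_ge0 // !sqrf_eq0 !subr_eq0 => /andP[/eqP yE /eqP y'E].
move: le_hk le_hq; rewrite -yE -y'E !subrr !expr0n !addr0 => le_hk le_hq.
by split => //; apply/le_anti; rewrite le_hk le_hq.
Qed.

Lemma hdist2_q_eq0 : hdist2 x q.1 = 0.
Proof.
have [q2E k2E hqk] := nearest_on_line.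
have f_lt : f q.1 < y' by rewrite (le_lt_trans Lq) // q2E.
have [t /andP[t_gt0 t_lt1] f_seg_lt] := continuous_segment_lt x f_cont f_lt.
have := k_nearest.2 (q.1 + t *: (x - q.1), y') (or_intror (ltW f_seg_lt)).
rewrite /dist2 /= hdist2_segment k2E subrr expr0n !addr0 -hqk => le_hq.
have t2_gt0 : 0 < t * (2 - t) by nra.
by apply/le_anti; rewrite hdist2_ge0 andbT; nra.
Qed.

Lemma no_equidistant_pair : False.
Proof.
have [q2E k2E hqk] := nearest_on_line.
have q1E : x = q.1 by apply: hdist2_eq0; exact: hdist2_q_eq0.
have k1E : x = k.1 by apply: hdist2_eq0; rewrite -hqk hdist2_q_eq0.
have : (K `&` epigraph f) k.
  split=> //; rewrite /epigraph /= -k1E q1E k2E.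
  by apply: le_trans Lq _; rewrite q2E ltW.
by rewrite K_epigraph_disjoint.
Qed.

End EquidistantPair.

Theorem theorem3 (R : realType) (n : nat) (hn : (1 <= n)%N)
  (f : 'rV[R]_n -> R) (K : set ('rV[R]_n * R)%type) :
  continuous f ->
  (forall x, 0 < f x) ->
  closed K ->
  K `&` epigraph f = set0 ->
  ~ (exists (x0 : 'rV[R]_n) (y1 y2 : R),
       [/\ 0 < y1, y1 < y2, ~ K (x0, y1) & K (x0, y2)]) ->
  forall (x : 'rV[R]_n) (y y' : R),
    dist_set (x, y) K = dist_set (x, y) (epigraph f) ->
    dist_set (x, y') K = dist_set (x, y') (epigraph f) ->
    y = y'.
Proof.
move=> f_cont f_gt0 K_closed KL0 no_gap x.
have K_down (p : pt R n) s : K p -> 0 < s -> s < p.2 -> K (p.1, s).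
  move=> Kp s_gt0 lt_s_p2; apply: contrapT => NK; apply: no_gap.
  by exists p.1, s, p.2; rewrite -surjective_pairing.
have L_closed := closed_epigraph f_cont.
have L0 : epigraph f !=set0 by exists (x, f x); rewrite /epigraph /=.
have lt_contra y y' : y < y' ->
    dist_set (x, y) K = dist_set (x, y) (epigraph f) ->
    dist_set (x, y') K = dist_set (x, y') (epigraph f) -> False.
  move=> lt_y_y' /(eq_dist_set_nearest K_closed L_closed L0) [_ [q [Lq q_near]]].
  move=> /(eq_dist_set_nearest K_closed L_closed L0) [[k [Kk k_near]] _].
  exact: (no_equidistant_pair f_cont f_gt0 KL0 K_down lt_y_y' Lq Kk q_near k_near).
move=> y y' eq_y eq_y'.
by case: (ltgtP y y') => [lt|lt|//]; [case: (lt_contra y y') | case: (lt_contra y' y)].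
Qed.
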